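(* Consider the system described in the context and assume (H1) and (H2). Then every steady state of the system is of one of the following nine types ($i\in\{1,2\}$), with components listed as $(S_1^1,X_1^1,S_2^1,X_2^1\mid S_1^2,X_1^2,S_2^2,X_2^2)$, and each type exists if and only if the stated existence condition holds: \begin{enumerate} \item $\mathcal{E}_{00}^{00}=(S_1^{\mathrm{in}},0,S_2^{\mathrm{in}},0\mid S_1^{\mathrm{in}},0,S_2^{\mathrm{in}},0)$; always exists. \item $\mathcal{E}_{00}^{0i}=\bigl(S_1^{\mathrm{in}},0,S_2^{\mathrm{in}},0\mid S_1^{\mathrm{in}},0,\lambda_2^{2i},\tfrac{S_2^{\mathrm{in}}-\lambda_2^{2i}}{\alpha k_3}\bigr)$; exists iff $S_2^{\mathrm{in}}>\lambda_2^{2i}$. \item $\mathcal{E}_{00}^{10}=\bigl(S_1^{\mathrm{in}},0,S_2^{\mathrm{in}},0\mid \lambda_1^2,\tfrac{S_1^{\mathrm{in}}-\lambda_1^2}{\alpha k_1},S_2^{\mathrm{in}}+\tfrac{k_2}{k_1}(S_1^{\mathrm{in}}-\lambda_1^2),0\bigr)$; exists iff $S_1^{\mathrm{in}}>\lambda_1^2$. \item $\mathcal{E}_{00}^{1i}=\bigl(S_1^{\mathrm{in}},0,S_2^{\mathrm{in}},0\mid \lambda_1^2,\tfrac{S_1^{\mathrm{in}}-\lambda_1^2}{\alpha k_1},\lambda_2^{2i},\tfrac{k_2(S_1^{\mathrm{in}}-F_{2i})}{\alpha k_1k_3}\bigr)$; exists iff $S_1^{\mathrm{in}}>\max(\lambda_1^2,F_{2i})$.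 \item $\mathcal{E}_{10}^{10}=\bigl(\lambda_1^1,X_1^{1*},S_2^{\mathrm{in}}+\tfrac{k_2}{k_1}(S_1^{\mathrm{in}}-\lambda_1^1),0\mid S_1^{\mathrm{in}}-\alpha k_1X_1^{2*},X_1^{2*},S_2^{\mathrm{in}}+\alpha k_2X_1^{2*},0\bigr)$; exists iff $S_1^{\mathrm{in}}>\lambda_1^1$. \item $\mathcal{E}_{10}^{1i}=\bigl(\lambda_1^1,X_1^{1*},S_2^{\mathrm{in}}+\tfrac{k_2}{k_1}(S_1^{\mathrm{in}}-\lambda_1^1),0\mid S_1^{\mathrm{in}}-\alpha k_1X_1^{2*},X_1^{2*},\lambda_2^{2i},\tfrac{\phi_i}{\alpha k_3}\bigr)$; exists iff $S_1^{\mathrm{in}}>\lambda_1^1$ and $\phi_i>0$. \item $\mathcal{E}_{0i}^{01}=\bigl(S_1^{\mathrm{in}},0,\lambda_2^{1i},\tfrac{S_2^{\mathrm{in}}-\lambda_2^{1i}}{\alpha k_3}\mid S_1^{\mathrm{in}},0,S_2^{\mathrm{in}}-\alpha k_3X_2^{2*},X_2^{2*}\bigr)$, where $X_2^{2*}$ is a solution of $f_2(x)=g_2(x)$ built with $S_2^{1*}=\lambda_2^{1i}$, $X_1^{1*}=0$, $X_1^{2*}=0$, $X_2^{1*}=\tfrac{S_2^{\mathrm{in}}-\lambda_2^{1i}}{\alpha k_3}$; exists iff $S_2^{\mathrm{in}}>\lambda_2^{1i}$. \item $\mathcal{E}_{0i}^{11}=\bigl(S_1^{\mathrm{in}},0,\lambda_2^{1i},\tfrac{S_2^{\mathrm{in}}-\lambda_2^{1i}}{\alpha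 k_3}\mid \lambda_1^2,\tfrac{S_1^{\mathrm{in}}-\lambda_1^2}{\alpha k_1},\tfrac{k_2}{k_1}(S_1^{\mathrm{in}}-\lambda_1^2)+S_2^{\mathrm{in}}-\alpha k_3X_2^{2*},X_2^{2*}\bigr)$, where $X_2^{2*}$ is a solution of $f_2(x)=g_2(x)$ built with $S_2^{1*}=\lambda_2^{1i}$, $X_1^{1*}=0$, $X_1^{2*}=\tfrac{S_1^{\mathrm{in}}-\lambda_1^2}{\alpha k_1}$, $X_2^{1*}=\tfrac{S_2^{\mathrm{in}}-\lambda_2^{1i}}{\alpha k_3}$; exists iff $S_1^{\mathrm{in}}>\lambda_1^2$ and $S_2^{\mathrm{in}}>\lambda_2^{1i}$. \item $\mathcal{E}_{1i}^{11}=\bigl(\lambda_1^1,X_1^{1*},\lambda_2^{1i},\tfrac{k_2(S_1^{\mathrm{in}}-F_{1i})}{\alpha k_1k_3}\mid S_1^{\mathrm{in}}-\alpha k_1X_1^{2*},X_1^{2*},S_2^{\mathrm{in}}+\alpha k_2X_1^{2*}-\alpha k_3X_2^{2*},X_2^{2*}\bigr)$, where $X_2^{2*}$ is a solution of $f_2(x)=g_2(x)$ built with $S_2^{1*}=\lambda_2^{1i}$, $X_1^{1*}=\tfrac{S_1^{\mathrm{in}}-\lambda_1^1}{\alpha k_1}$, $X_1^{2*}$ as defined in the context, $X_2^{1*}=\tfrac{k_2(S_1^{\mathrm{in}}-F_{1i})}{\alpha k_1k_3}$; exists iff $S_1^{\mathrm{in}}>\max(\lambda_1^1,F_{1i})$.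 \end{enumerate}
   Context: Consider the system of ODEs for $\xi=(S_1^1,X_1^1,S_2^1,X_2^1,S_1^2,X_1^2,S_2^2,X_2^2)\in\mathbb{R}_+^8$: $\dot S_1^1=D_1(S_1^{\mathrm{in}}-S_1^1)-k_1\mu_1(S_1^1)X_1^1$, $\dot X_1^1=(\mu_1(S_1^1)-\alpha D_1)X_1^1$, $\dot S_2^1=D_1(S_2^{\mathrm{in}}-S_2^1)+k_2\mu_1(S_1^1)X_1^1-k_3\mu_2(S_2^1)X_2^1$, $\dot X_2^1=(\mu_2(S_2^1)-\alpha D_1)X_2^1$, $\dot S_1^2=D_2(S_1^1-S_1^2)-k_1\mu_1(S_1^2)X_1^2$, $\dot X_1^2=\alpha D_2(X_1^1-X_1^2)+\mu_1(S_1^2)X_1^2$, $\dot S_2^2=D_2(S_2^1-S_2^2)+k_2\mu_1(S_1^2)X_1^2-k_3\mu_2(S_2^2)X_2^2$, $\dot X_2^2=\alpha D_2(X_2^1-X_2^2)+\mu_2(S_2^2)X_2^2$. Here $D>0$, $r\in(0,1)$, $r_1=r$, $r_2=1-r$, $D_i=D/r_i$, $\alpha\in(0,1)$, $k_1,k_2,k_3>0$, $S_1^{\mathrm{in}},S_2^{\mathrm{in}}>0$. The functions $\mu_1,\mu_2\in\mathcal C^1(\mathbb R_+)$ satisfy (H1): $\mu_1(0)=0$, $\lim_{s\to\infty}\mu_1(s)=m_1$, $\mu_1'(s)>0$ for $s>0$; (H2): $\mu_2(0)=0$, $\lim_{s\to\infty}\mu_2(s)=0$, and there is $S_2^{\mathrm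 m}>0$ with $\mu_2'>0$ on $(0,S_2^{\mathrm m})$ and $\mu_2'<0$ on $(S_2^{\mathrm m},\infty)$. Notation ($i,j\in\{1,2\}$): $\lambda_1^i$ is the unique solution of $\mu_1(S)=\alpha D_i$ when $D<r_im_1/\alpha$, and $\lambda_1^i=+\infty$ otherwise; $\lambda_2^{i1}<\lambda_2^{i2}$ are the two solutions of $\mu_2(S)=\alpha D_i$ when $D\le r_i\mu_2(S_2^{\mathrm m})/\alpha$, and $+\infty$ otherwise; $F_{ij}=\lambda_1^i+\frac{k_1}{k_2}(\lambda_2^{ij}-S_2^{\mathrm{in}})$. When $S_1^{\mathrm{in}}>\lambda_1^1$, put $X_1^{1*}=(S_1^{\mathrm{in}}-\lambda_1^1)/(\alpha k_1)$, $f_1(x)=\mu_1(S_1^{\mathrm{in}}-\alpha k_1x)$ on $[0,S_1^{\mathrm{in}}/(\alpha k_1)]$, $g_1(x)=\alpha D_2(x-X_1^{1*})/x$, and let $X_1^{2*}$ be the unique solution of $f_1(x)=g_1(x)$ in $(X_1^{1*},S_1^{\mathrm{in}}/(\alpha k_1))$; set $\phi_j=S_2^{\mathrm{in}}+\alpha k_2X_1^{2*}-\lambda_2^{2j}$. Given numbers $S_2^{1*},X_1^{1*},X_2^{1*},X_1^{2*}$ (specified in each case), define $g_2(x)=\alpha D_2(x-X_2^{1*})/x$ on $(0,\infty)$ and $f_2(x)=\mu_2\bigl(S_2^{1*}-\alpha k_2(X_1^{1*}-X_1^{2*})+\alpha k_3(X_2^{1*}-x)\bigr)$ on $[0,d]$,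 $d=X_2^{1*}+(S_2^{1*}-\alpha k_2(X_1^{1*}-X_1^{2*}))/(\alpha k_3)$. *)

From Stdlib Require Import Reals ClassicalEpsilon.
From Coquelicot Require Import Coquelicot.
Open Scope R_scope.

Record sys := mkSys {
  D : R; r : R; alpha : R; k1 : R; k2 : R; k3 : R;
  S1in : R; S2in : R;
  mu1 : R -> R; mu2 : R -> R;
  m1 : R;    (* limit of mu1 at +oo, pinned down by (H1) *)
  S2m : R    (* the peak point S_2^m of mu2, pinned down by (H2) *)
}.

Definition C1_Rplus_with (f f' : R -> R) : Prop :=
  (forall s, 0 < s -> is_derive f s (f' s)) /\
  filterlim (fun h => (f h - f 0) / h) (at_right 0) (locally (f' 0)) /\
  (forall s, 0 <= s ->
     filterlim f' (within (fun t => 0 <= t) (locally s)) (locally (f' s))).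

Definition H1 (mu : R -> R) (m : R) : Prop :=
  exists mu', C1_Rplus_with mu mu' /\
    mu 0 = 0 /\ is_lim mu p_infty (Finite m) /\
    (forall s, 0 < s -> mu' s > 0).

Definition H2 (mu : R -> R) (Sm : R) : Prop :=
  exists mu', C1_Rplus_with mu mu' /\
    mu 0 = 0 /\ is_lim mu p_infty (Finite 0) /\ 0 < Sm /\
    (forall s, 0 < s < Sm -> mu' s > 0) /\
    (forall s, Sm < s -> mu' s < 0).

Inductive idx := I1 | I2.

Definition ri (p : sys) (i : idx) : R :=
  match i with I1 => r p | I2 => 1 - r p end.
Definition Di (p : sys) (i : idx) : R := D p / ri p i.

Definition lam1 (p : sys) (i : idx) : Rbar :=
  match Rlt_dec (D p) (ri p i * m1 p / alpha p) with
  | left _ => Finite (epsilon (inhabits 0)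
                (fun S => 0 <= S /\ mu1 p S = alpha p * Di p i))
  | right _ => p_infty
  end.

(** lambda_2^{i1} <= lambda_2^{i2}: the smaller and the larger (nonnegative)
    solutions of mu2(S) = alpha D_i when D <= r_i mu2(S_2^m)/alpha,
    and +oo otherwise. *)
Definition lam2 (p : sys) (i j : idx) : Rbar :=
  match Rle_dec (D p) (ri p i * mu2 p (S2m p) / alpha p) with
  | left _ => Finite (epsilon (inhabits 0) (fun S =>
       0 <= S /\ mu2 p S = alpha p * Di p i /\
       forall S', 0 <= S' -> mu2 p S' = alpha p * Di p i ->
         match j with I1 => S <= S' | I2 => S' <= S end))
  | right _ => p_infty
  end.

Definition Fij (p : sys) (i j : idx) : Rbar :=
  Rbar_plus (lam1 p i)
    (Rbar_mult (Finite (k1 p / k2 p)) (Rbar_minus (lam2 p i j) (Finite (S2in p)))).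

(** X_1^{1*}, f_1, g_1 and X_1^{2*} (meaningful when S1in > lambda_1^1). *)
Definition X11star (p : sys) : R := (S1in p - real (lam1 p I1)) / (alpha p * k1 p).
Definition f1 (p : sys) (x : R) : R := mu1 p (S1in p - alpha p * k1 p * x).
Definition g1 (p : sys) (x : R) : R := alpha p * Di p I2 * (x - X11star p) / x.
Definition X12star (p : sys) : R :=
  epsilon (inhabits 0) (fun x =>
    X11star p < x < S1in p / (alpha p * k1 p) /\ f1 p x = g1 p x).

Definition phi (p : sys) (j : idx) : Rbar :=
  Rbar_minus (Finite (S2in p + alpha p * k2 p * X12star p)) (lam2 p I2 j).

(** f_2, g_2 and the right end d of the domain of f_2, given
    S21 = S_2^{1*}, X11 = X_1^{1*}, X12 = X_1^{2*}, X21 = X_2^{1*}. *)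
Definition g2 (p : sys) (X21 x : R) : R := alpha p * Di p I2 * (x - X21) / x.
Definition f2 (p : sys) (S21 X11 X12 X21 x : R) : R :=
  mu2 p (S21 - alpha p * k2 p * (X11 - X12) + alpha p * k3 p * (X21 - x)).
Definition d2 (p : sys) (S21 X11 X12 X21 : R) : R :=
  X21 + (S21 - alpha p * k2 p * (X11 - X12)) / (alpha p * k3 p).
Definition sol2 (p : sys) (S21 X11 X12 X21 x : R) : Prop :=
  0 < x <= d2 p S21 X11 X12 X21 /\ f2 p S21 X11 X12 X21 x = g2 p X21 x.

Record state := mkState {
  S11 : R; X11 : R; S21 : R; X21 : R;
  S12 : R; X12 : R; S22 : R; X22 : R
}.

Definition steady (p : sys) (xi : state) : Prop :=
  let a := alpha p in let D1 := Di p I1 in let D2 := Di p I2 in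
  let m1f := mu1 p in let m2f := mu2 p in
  (0 <= S11 xi /\ 0 <= X11 xi /\ 0 <= S21 xi /\ 0 <= X21 xi /\
   0 <= S12 xi /\ 0 <= X12 xi /\ 0 <= S22 xi /\ 0 <= X22 xi) /\
  D1 * (S1in p - S11 xi) - k1 p * m1f (S11 xi) * X11 xi = 0 /\
  (m1f (S11 xi) - a * D1) * X11 xi = 0 /\
  D1 * (S2in p - S21 xi) + k2 p * m1f (S11 xi) * X11 xi
     - k3 p * m2f (S21 xi) * X21 xi = 0 /\
  (m2f (S21 xi) - a * D1) * X21 xi = 0 /\
  D2 * (S11 xi - S12 xi) - k1 p * m1f (S12 xi) * X12 xi = 0 /\
  a * D2 * (X11 xi - X12 xi) + m1f (S12 xi) * X12 xi = 0 /\
  D2 * (S21 xi - S22 xi) + k2 p * m1f (S12 xi) * X12 xi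
     - k3 p * m2f (S22 xi) * X22 xi = 0 /\
  a * D2 * (X21 xi - X22 xi) + m2f (S22 xi) * X22 xi = 0.

Inductive ty :=
  | E00_00
  | E00_0 (i : idx)
  | E00_10
  | E00_1 (i : idx)
  | E10_10
  | E10_1 (i : idx)
  | E0_01 (i : idx)
  | E0_11 (i : idx)
  | E1_11 (i : idx).

Definition of_type (p : sys) (t : ty) (xi : state) : Prop :=
  let s1 := S1in p in let s2 := S2in p in let a := alpha p in
  match t with
  | E00_00 => xi = mkState s1 0 s2 0 s1 0 s2 0
  | E00_0 i =>
      is_finite (lam2 p I2 i) /\
      let L := real (lam2 p I2 i) in
      xi = mkState s1 0 s2 0 s1 0 L ((s2 - L) / (a * k3 p)) /\ 0 < X22 xi
  | E00_10 =>
      is_finite (lam1 p I2) /\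
      let L := real (lam1 p I2) in
      xi = mkState s1 0 s2 0 L ((s1 - L) / (a * k1 p))
                   (s2 + k2 p / k1 p * (s1 - L)) 0 /\ 0 < X12 xi
  | E00_1 i =>
      is_finite (lam1 p I2) /\ is_finite (lam2 p I2 i) /\
      let L := real (lam1 p I2) in let L' := real (lam2 p I2 i) in
      let F := real (Fij p I2 i) in
      xi = mkState s1 0 s2 0 L ((s1 - L) / (a * k1 p))
                   L' (k2 p * (s1 - F) / (a * k1 p * k3 p)) /\
      0 < X12 xi /\ 0 < X22 xi
  | E10_10 =>
      is_finite (lam1 p I1) /\
      let L := real (lam1 p I1) in let x12 := X12star p in
      xi = mkState L (X11star p) (s2 + k2 p / k1 p * (s1 - L)) 0
                   (s1 - a * k1 p * x12) x12 (s2 + a * k2 p * x12) 0 /\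
      0 < X11 xi /\ 0 < X12 xi
  | E10_1 i =>
      is_finite (lam1 p I1) /\ is_finite (lam2 p I2 i) /\
      let L := real (lam1 p I1) in let L' := real (lam2 p I2 i) in
      let x12 := X12star p in
      xi = mkState L (X11star p) (s2 + k2 p / k1 p * (s1 - L)) 0
                   (s1 - a * k1 p * x12) x12 L' (real (phi p i) / (a * k3 p)) /\
      0 < X11 xi /\ 0 < X12 xi /\ 0 < X22 xi
  | E0_01 i =>
      is_finite (lam2 p I1 i) /\
      let L := real (lam2 p I1 i) in let x21 := (s2 - L) / (a * k3 p) in
      exists x, sol2 p L 0 0 x21 x /\
        xi = mkState s1 0 L x21 s1 0 (s2 - a * k3 p * x) x /\
        0 < X21 xi /\ 0 < X22 xi
  | E0_11 i =>
      is_finite (lam1 p I2) /\ is_finite (lam2 p I1 i) /\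
      let L := real (lam1 p I2) in let L' := real (lam2 p I1 i) in
      let x21 := (s2 - L') / (a * k3 p) in let x12 := (s1 - L) / (a * k1 p) in
      exists x, sol2 p L' 0 x12 x21 x /\
        xi = mkState s1 0 L' x21 L x12
                     (k2 p / k1 p * (s1 - L) + s2 - a * k3 p * x) x /\
        0 < X21 xi /\ 0 < X12 xi /\ 0 < X22 xi
  | E1_11 i =>
      is_finite (lam1 p I1) /\ is_finite (lam2 p I1 i) /\
      let L := real (lam1 p I1) in let L' := real (lam2 p I1 i) in
      let F := real (Fij p I1 i) in
      let x11 := (s1 - L) / (a * k1 p) in let x12 := X12star p in
      let x21 := k2 p * (s1 - F) / (a * k1 p * k3 p) in
      exists x, sol2 p L' x11 x12 x21 x /\
        xi = mkState L x11 L' x21 (s1 - a * k1 p * x12) x12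
                     (s2 + a * k2 p * x12 - a * k3 p * x) x /\
        0 < X11 xi /\ 0 < X21 xi /\ 0 < X12 xi /\ 0 < X22 xi
  end.

Definition cond (p : sys) (t : ty) : Prop :=
  let s1 := Finite (S1in p) in let s2 := Finite (S2in p) in
  match t with
  | E00_00 => True
  | E00_0 i => Rbar_lt (lam2 p I2 i) s2
  | E00_10 => Rbar_lt (lam1 p I2) s1
  | E00_1 i => Rbar_lt (lam1 p I2) s1 /\ Rbar_lt (Fij p I2 i) s1
  | E10_10 => Rbar_lt (lam1 p I1) s1
  | E10_1 i => Rbar_lt (lam1 p I1) s1 /\ Rbar_lt (Finite 0) (phi p i)
  | E0_01 i => Rbar_lt (lam2 p I1 i) s2
  | E0_11 i => Rbar_lt (lam1 p I2) s1 /\ Rbar_lt (lam2 p I1 i) s2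
  | E1_11 i => Rbar_lt (lam1 p I1) s1 /\ Rbar_lt (Fij p I1 i) s1
  end.

From Stdlib Require Import Reals Lra ClassicalEpsilon.
From Coquelicot Require Import Coquelicot.
Open Scope R_scope.

(** At a steady state the substrate equations collapse to the conservation laws
    [S1 + alpha k1 X1 = S1in] and [S2 + alpha k3 X2 - alpha k2 X1 = S2in], in both tanks, so a
    steady state is determined by its four biomasses.  A biomass in the first tank is either
    zero or forces [mu (S) = alpha D1], i.e. [S = lambda^1].  A biomass [X] in the second tank
    with upstream biomass [X0] satisfies [mu (S) X = alpha D2 (X - X0)]: for [X0 = 0] this
    forces [S = lambda^2]; for [X0 > 0] it is the equation [f = g], where [g] rises from [0] at
    [X0] while [f] falls from [mu (S) > 0] to [mu 0 = 0] at washout, so the intermediate value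
    theorem gives a root, unique when [mu = mu1] is increasing.  Each species is thus absent,
    present in the second tank only, or present in both; the nine combinations are the nine
    types, and each existence condition says that the resulting biomasses are positive. *)

Lemma MVT_open (g g' : R -> R) (a b : R) : a < b ->
  (forall x, a < x < b -> is_derive g x (g' x)) ->
  (forall x, a <= x <= b -> continuity_pt g x) ->
  exists c, a < c < b /\ g b - g a = g' c * (b - a).
Proof.
  intros Hab Hd Hc.
  pose (pr c (Hc' : a < c < b) :=
    exist _ (g' c) (proj1 (is_derive_Reals _ _ _) (Hd c Hc')) : derivable_pt g c).
  destruct (MVT g id a b pr (fun c _ => derivable_pt_id c) Hab Hc
              (fun c _ => continuity_pt_id c)) as (c & Pc & E).
  exists c; split; [exact Pc|].
  rewrite derive_pt_id in E. simpl in E. unfold id in E. lra.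
Qed.

Lemma IVT_level (F : R -> R) (a b c : R) : (forall x, continuity_pt F x) -> a <= b ->
  (F a - c) * (F b - c) <= 0 -> exists x, a <= x <= b /\ F x = c.
Proof.
  intros HF Hab Hs.
  assert (HG : continuity (fun x => F x - c)).
  { intro x. apply continuity_pt_minus; [apply HF|apply continuity_pt_const; now intros ? ?]. }
  destruct (IVT_cor _ a b HG Hab Hs) as (x & Hx & E).
  exists x; split; [exact Hx|lra].
Qed.

Lemma lim_pinfty_beyond (f : R -> R) (l T eps : R) :
  is_lim f p_infty (Finite l) -> 0 < eps -> exists x, T < x /\ Rabs (f x - l) < eps.
Proof.
  intros Hl He. apply is_lim_spec in Hl. destruct (Hl (mkposreal eps He)) as [M HM].
  exists (Rmax M T + 1). split.
  - pose proof (Rmax_r M T); lra.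
  - apply HM. pose proof (Rmax_l M T); lra.
Qed.

Lemma continuity_pt_affine_comp (F : R -> R) (u v x : R) :
  (forall y, continuity_pt F y) -> continuity_pt (fun x => F (u - v * x)) x.
Proof. intros HF. apply (continuity_pt_comp (fun x => u - v * x) F); [reg|apply HF]. Qed.

Lemma lt_div_iff (a x s : R) : 0 < a -> (x < s / a <-> a * x < s).
Proof. intros Ha. assert (E : s = a * (s / a)) by (field; lra). split; intro; nra. Qed.

Lemma le_div_iff (a x s : R) : 0 < a -> (x <= s / a <-> a * x <= s).
Proof. intros Ha. assert (E : s = a * (s / a)) by (field; lra). split; intro; nra. Qed.

Lemma epsilon_eq {A : Type} (i : inhabited A) (Q : A -> Prop) (x : A) :
  Q x -> (forall y, Q y -> y = x) -> epsilon i Q = x.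
Proof. intros Hx Hu. apply Hu, epsilon_spec. now exists x. Qed.

Section C1_on_Rplus.

Variables f f' : R -> R.
Hypothesis Hf : C1_Rplus_with f f'.

Lemma C1_right_continuous_0 (eps : R) : 0 < eps ->
  exists del, 0 < del /\ forall h, 0 <= h < del -> Rabs (f h - f 0) < eps.
Proof.
  intros Heps. destruct Hf as [_ [Hq _]].
  apply filterlim_locally with (eps := mkposreal 1 Rlt_0_1) in Hq.
  destruct Hq as [[d Hd] Hq]. simpl in Hq.
  set (K := Rabs (f' 0) + 1).
  assert (HK : 0 < K) by (pose proof (Rabs_pos (f' 0)); unfold K; lra).
  exists (Rmin d (eps / K)). split.
  { apply Rmin_pos; [exact Hd|apply Rdiv_lt_0_compat; lra]. }
  intros h [H0 Hh]. pose proof (Rmin_l d (eps / K)); pose proof (Rmin_r d (eps / K)).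
  destruct (Req_dec h 0) as [->|Hn]; [rewrite Rminus_diag, Rabs_R0; lra|].
  assert (Hball : ball 0 d h).
  { apply Rabs_lt_between'. lra. }
  specialize (Hq h Hball ltac:(lra)).
  change (Rabs ((f h - f 0) / h - f' 0) < 1) in Hq.
  assert (Hq' : Rabs ((f h - f 0) / h) < K).
  { pose proof (Rabs_triang_inv ((f h - f 0) / h) (f' 0)). unfold K; lra. }
  replace (f h - f 0) with ((f h - f 0) / h * h) by (field; exact Hn).
  rewrite Rabs_mult, (Rabs_pos_eq h H0).
  apply Rle_lt_trans with (K * h); [apply Rmult_le_compat_r; lra|].
  apply Rlt_le_trans with (K * (eps / K)); [apply Rmult_lt_compat_l; lra|].
  right; field; lra.
Qed.

(* [f] is only C^1 on [0, +oo); continuing it by the constant [f 0] to the left gives a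
   function continuous on all of R, to which the library IVT and MVT apply. *)
Lemma C1_extension_continuous (x : R) : continuity_pt (fun t => f (Rmax 0 t)) x.
Proof.
  apply continuity_pt_locally. intros [eps Heps]; simpl.
  destruct (Rle_lt_dec x 0) as [Hx|Hx].
  - destruct (C1_right_continuous_0 eps Heps) as (d & Hd & Hc).
    exists (mkposreal d Hd). intros y Hy.
    change (Rabs (y - x) < d) in Hy. apply Rabs_def2 in Hy.
    rewrite (Rmax_left 0 x Hx). apply Hc. split; [apply Rmax_l|apply Rmax_lub_lt; lra].
  - assert (Hc : continuity_pt f x).
    { apply continuity_pt_filterlim, (ex_derive_continuous (V := R_NormedModule)).
      exists (f' x). apply (proj1 Hf), Hx. }
    destruct (proj1 (continuity_pt_locally f x) Hc (mkposreal eps Heps)) as [[d Hd] Hc'].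
    exists (mkposreal (Rmin d x) (Rmin_pos _ _ Hd Hx)). intros y Hy.
    change (Rabs (y - x) < Rmin d x) in Hy. apply Rabs_def2 in Hy.
    pose proof (Rmin_l d x); pose proof (Rmin_r d x).
    rewrite (Rmax_right 0 y), (Rmax_right 0 x) by lra.
    apply Hc'. change (Rabs (y - x) < d). apply Rabs_def1; lra.
Qed.

Lemma C1_mean_value (a b : R) : 0 <= a < b ->
  exists c, a < c < b /\ f b - f a = f' c * (b - a).
Proof.
  intros Hab.
  destruct (MVT_open (fun t => f (Rmax 0 t)) f' a b (proj2 Hab)) as (c & Hc & E).
  - intros x Hx. apply is_derive_ext_loc with f; [|apply (proj1 Hf); lra].
    exists (mkposreal x ltac:(lra)). intros y Hy.
    change (Rabs (y - x) < x) in Hy. apply Rabs_def2 in Hy.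
    rewrite Rmax_right by lra. reflexivity.
  - intros x _. apply C1_extension_continuous.
  - exists c. rewrite !Rmax_right in E by lra. split; [exact Hc|exact E].
Qed.

End C1_on_Rplus.

(** * The growth functions under (H1) and (H2) *)

Section Monotone_growth.

Variables (mu : R -> R) (m : R).
Hypothesis H : H1 mu m.

Lemma H1_zero : mu 0 = 0.
Proof. now destruct H as (mu' & _ & H0 & _). Qed.

Lemma H1_continuous (x : R) : continuity_pt (fun t => mu (Rmax 0 t)) x.
Proof. destruct H as (mu' & HC & _). exact (C1_extension_continuous _ _ HC x). Qed.

Lemma H1_increasing (a b : R) : 0 <= a < b -> mu a < mu b.
Proof.
  intros Hab. destruct H as (mu' & HC & _ & _ & Hpos).
  destruct (C1_mean_value _ _ HC a b Hab) as (c & Hc & E).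
  specialize (Hpos c ltac:(lra)). nra.
Qed.

Lemma H1_injective (a b : R) : 0 <= a -> 0 <= b -> mu a = mu b -> a = b.
Proof.
  intros Ha Hb E. destruct (Rtotal_order a b) as [h|[h|h]]; [|exact h|].
  - pose proof (H1_increasing a b (conj Ha h)); lra.
  - pose proof (H1_increasing b a (conj Hb h)); lra.
Qed.

Lemma H1_lt_limit (s : R) : 0 <= s -> mu s < m.
Proof.
  intros Hs. destruct (Rlt_le_dec (mu s) m) as [h|h]; [exact h|exfalso].
  pose proof (H1_increasing s (s + 1) ltac:(lra)) as Hs1.
  destruct H as (_ & _ & _ & Hl & _).
  destruct (lim_pinfty_beyond mu m (s + 1) (mu (s + 1) - m) Hl ltac:(lra)) as (x & Hx & Hc).
  pose proof (H1_increasing (s + 1) x ltac:(lra)).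
  apply Rabs_def2 in Hc. lra.
Qed.

Lemma H1_level (c : R) : 0 < c < m -> exists s, 0 <= s /\ mu s = c.
Proof.
  intros Hc. destruct H as (_ & _ & _ & Hl & _).
  destruct (lim_pinfty_beyond mu m 0 (m - c) Hl ltac:(lra)) as (T & HT & HmT).
  apply Rabs_def2 in HmT.
  destruct (IVT_level (fun t => mu (Rmax 0 t)) 0 T c H1_continuous) as (s & Hs & E).
  - lra.
  - rewrite !Rmax_right, H1_zero by lra. nra.
  - exists s. rewrite Rmax_right in E by lra. split; [lra|exact E].
Qed.

End Monotone_growth.

Section Inhibited_growth.

Variables (mu : R -> R) (Sm : R).
Hypothesis H : H2 mu Sm.

Lemma H2_zero : mu 0 = 0.
Proof. now destruct H as (mu' & _ & H0 & _). Qed.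

Lemma H2_peak_pos : 0 < Sm.
Proof. now destruct H as (mu' & _ & _ & _ & HSm & _). Qed.

Lemma H2_continuous (x : R) : continuity_pt (fun t => mu (Rmax 0 t)) x.
Proof. destruct H as (mu' & HC & _). exact (C1_extension_continuous _ _ HC x). Qed.

Lemma H2_increasing (a b : R) : 0 <= a < b -> b <= Sm -> mu a < mu b.
Proof.
  intros Hab Hb. destruct H as (mu' & HC & _ & _ & _ & Hinc & _).
  destruct (C1_mean_value _ _ HC a b Hab) as (c & Hc & E).
  specialize (Hinc c ltac:(lra)). nra.
Qed.

Lemma H2_decreasing (a b : R) : Sm <= a < b -> mu b < mu a.
Proof.
  intros Hab. pose proof H2_peak_pos. destruct H as (mu' & HC & _ & _ & _ & _ & Hdec).
  destruct (C1_mean_value _ _ HC a b ltac:(lra)) as (c & Hc & E).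
  specialize (Hdec c ltac:(lra)). nra.
Qed.

Lemma H2_le_peak (s : R) : 0 <= s -> mu s <= mu Sm.
Proof.
  intros Hs. destruct (Rtotal_order s Sm) as [h|[->|h]].
  - left; apply H2_increasing; lra.
  - lra.
  - left; apply H2_decreasing; lra.
Qed.

Lemma H2_pos (s : R) : 0 < s -> 0 < mu s.
Proof.
  intros Hs. rewrite <- H2_zero. destruct (Rle_lt_dec s Sm) as [h|h].
  { apply H2_increasing; lra. }
  destruct (Rlt_le_dec (mu 0) (mu s)) as [h'|h']; [exact h'|exfalso].
  rewrite H2_zero in h'.
  pose proof (H2_decreasing s (s + 1) ltac:(lra)) as Hs1.
  destruct H as (_ & _ & _ & Hl & _).
  destruct (lim_pinfty_beyond mu 0 (s + 1) (mu s - mu (s + 1)) Hl ltac:(lra)) as (x & Hx & Hc).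
  pose proof (H2_decreasing (s + 1) x ltac:(lra)).
  apply Rabs_def2 in Hc. lra.
Qed.

Lemma H2_level_left (c : R) : 0 < c <= mu Sm -> exists s, 0 <= s <= Sm /\ mu s = c.
Proof.
  intros Hc. pose proof H2_peak_pos.
  destruct (IVT_level (fun t => mu (Rmax 0 t)) 0 Sm c H2_continuous) as (s & Hs & E).
  - lra.
  - rewrite !Rmax_right, H2_zero by lra. nra.
  - exists s. rewrite Rmax_right in E by lra. split; [exact Hs|exact E].
Qed.

Lemma H2_level_right (c : R) : 0 < c <= mu Sm -> exists s, Sm <= s /\ mu s = c.
Proof.
  intros Hc. pose proof H2_peak_pos. destruct H as (_ & _ & _ & Hl & _).
  destruct (lim_pinfty_beyond mu 0 Sm c Hl ltac:(lra)) as (T & HT & HmT).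
  apply Rabs_def2 in HmT.
  destruct (IVT_level (fun t => mu (Rmax 0 t)) Sm T c H2_continuous) as (s & Hs & E).
  - lra.
  - rewrite !Rmax_right by lra. nra.
  - exists s. rewrite Rmax_right in E by lra. split; [lra|exact E].
Qed.

Lemma H2_level_min (S c : R) : 0 <= S <= Sm -> mu S = c ->
  forall S', 0 <= S' -> mu S' = c -> S <= S'.
Proof.
  intros HS E S' HS' E'. destruct (Rle_lt_dec S S') as [h|h]; [exact h|].
  pose proof (H2_increasing S' S ltac:(lra) ltac:(lra)); lra.
Qed.

Lemma H2_level_max (S c : R) : Sm <= S -> mu S = c ->
  forall S', 0 <= S' -> mu S' = c -> S' <= S.
Proof.
  intros HS E S' HS' E'. destruct (Rle_lt_dec S' S) as [h|h]; [exact h|].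
  pose proof (H2_decreasing S S' ltac:(lra)); lra.
Qed.

End Inhibited_growth.

(** * The balance equation of the second tank *)

Lemma balance_root_exists (F : R -> R) (c x0 e : R) :
  (forall x, continuity_pt F x) -> 0 < c -> 0 < x0 < e -> 0 < F x0 -> F e = 0 ->
  exists x, x0 < x < e /\ F x = c * (x - x0) / x.
Proof.
  intros HF Hc [Hx0 Hx0e] HFx0 HFe.
  set (h x := F x * x - c * (x - x0)).
  assert (Hh : forall x, continuity_pt h x).
  { intro x. apply continuity_pt_minus.
    - apply continuity_pt_mult; [apply HF|apply continuity_pt_id].
    - apply continuity_pt_scal, continuity_pt_minus;
        [apply continuity_pt_id|apply continuity_pt_const; now intros ? ?]. }
  destruct (IVT_level h x0 e 0 Hh) as (x & Hx & E); unfold h in *.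
  - lra.
  - assert (0 < F x0 * x0) by (apply Rmult_lt_0_compat; lra).
    assert (0 < c * (e - x0)) by (apply Rmult_lt_0_compat; lra).
    rewrite HFe. nra.
  - assert (x <> x0) by (intros ->; nra).
    assert (x <> e) by (intros ->; rewrite HFe in E; nra).
    exists x. split; [lra|]. field_simplify_eq; lra.
Qed.

Lemma balance_root_unique (F : R -> R) (c x0 e x y : R) :
  (forall u v, x0 < u -> u < v -> v < e -> F v < F u) -> 0 < c -> 0 < x0 ->
  x0 < x < e -> x0 < y < e ->
  F x = c * (x - x0) / x -> F y = c * (y - x0) / y -> x = y.
Proof.
  (* F decreases while x |-> c (x - x0) / x = c - c x0 / x increases *)
  intros Hdec Hc Hx0 Hx Hy Ex Ey.
  assert (Ex' : (F x - c) * x = - c * x0) by (rewrite Ex; field; lra).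
  assert (Ey' : (F y - c) * y = - c * x0) by (rewrite Ey; field; lra).
  assert (Hlt : forall u v, x0 < u < e -> x0 < v < e -> u < v ->
    (F u - c) * u = - c * x0 -> (F v - c) * v = - c * x0 -> False).
  { intros u v Hu Hv Huv Eu Ev. pose proof (Hdec u v ltac:(lra) Huv ltac:(lra)).
    assert (F v - c < 0) by nra.
    assert ((F v - c) * (v - u) < 0) by (apply Rmult_neg_pos; lra).
    assert ((F v - c) * u < (F u - c) * u) by (apply Rmult_lt_compat_r; lra).
    nra. }
  destruct (Rtotal_order x y) as [h|[h|h]]; [|exact h|]; exfalso.
  - exact (Hlt x y Hx Hy h Ex' Ey').
  - exact (Hlt y x Hy Hx h Ey' Ex').
Qed.

Lemma cascade_cases (u1 u2 c1 c2 x1 x2 : R) :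
  0 < c2 -> 0 <= x1 -> 0 <= x2 ->
  (u1 - c1) * x1 = 0 -> u2 * x2 = c2 * (x2 - x1) ->
  x1 = 0 /\ x2 = 0 \/ x1 = 0 /\ 0 < x2 /\ u2 = c2 \/ 0 < x1 /\ u1 = c1 /\ 0 < x2.
Proof.
  intros Hc2 Hx1 Hx2 E1 E2.
  destruct (Rle_lt_or_eq_dec 0 x1 Hx1) as [Px1|<-].
  - right; right. split; [exact Px1|]. split; [destruct (Rmult_integral _ _ E1); lra|].
    destruct (Rle_lt_or_eq_dec 0 x2 Hx2) as [h|<-]; [exact h|nra].
  - destruct (Rle_lt_or_eq_dec 0 x2 Hx2) as [Px2|<-]; [|left; lra].
    right; left. repeat split; try lra.
    apply Rmult_eq_reg_r with x2; lra.
Qed.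

(** * Steady states *)

Record model_hyps (p : sys) : Prop := {
  D_pos : 0 < D p;
  r_range : 0 < r p < 1;
  alpha_range : 0 < alpha p < 1;
  k1_pos : 0 < k1 p;
  k2_pos : 0 < k2 p;
  k3_pos : 0 < k3 p;
  S1in_pos : 0 < S1in p;
  S2in_pos : 0 < S2in p;
  mu1_H1 : H1 (mu1 p) (m1 p);
  mu2_H2 : H2 (mu2 p) (S2m p) }.

Definition nonneg_state (xi : state) : Prop :=
  0 <= S11 xi /\ 0 <= X11 xi /\ 0 <= S21 xi /\ 0 <= X21 xi /\
  0 <= S12 xi /\ 0 <= X12 xi /\ 0 <= S22 xi /\ 0 <= X22 xi.

(* Where a species lives at equilibrium: nowhere, in the second tank only, or in both tanks
   (presence in the first tank forces presence in the second).  For the second species [j]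
   selects the root [lambda_2^{ij}] of [mu2 = alpha Di]. *)
Inductive profile1 := absent1 | second_only1 | both1.
Inductive profile2 := absent2 | second_only2 (j : idx) | both2 (j : idx).

Definition species1 (p : sys) (k : profile1) (s11 x11 s12 x12 : R) : Prop :=
  s11 = S1in p - alpha p * k1 p * x11 /\ s12 = S1in p - alpha p * k1 p * x12 /\
  match k with
  | absent1 => x11 = 0 /\ x12 = 0
  | second_only1 => x11 = 0 /\ lam1 p I2 = Finite s12 /\ 0 < x12
  | both1 => lam1 p I1 = Finite s11 /\ 0 < x11 /\ x12 = X12star p
  end.

Definition species2 (p : sys) (l : profile2) (x11 x12 s21 x21 s22 x22 : R) : Prop :=
  s21 = S2in p + alpha p * k2 p * x11 - alpha p * k3 p * x21 /\
  s22 = S2in p + alpha p * k2 p * x12 - alpha p * k3 p * x22 /\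
  match l with
  | absent2 => x21 = 0 /\ x22 = 0
  | second_only2 j => x21 = 0 /\ lam2 p I2 j = Finite s22 /\ 0 < x22
  | both2 j => lam2 p I1 j = Finite s21 /\ 0 < x21 /\ 0 < x22 /\ 0 <= s22 /\
      mu2 p s22 * x22 = alpha p * Di p I2 * (x22 - x21)
  end.

Definition type_of (k : profile1) (l : profile2) : ty :=
  match k, l with
  | absent1, absent2 => E00_00
  | absent1, second_only2 j => E00_0 j
  | absent1, both2 j => E0_01 j
  | second_only1, absent2 => E00_10
  | second_only1, second_only2 j => E00_1 j
  | second_only1, both2 j => E0_11 j
  | both1, absent2 => E10_10
  | both1, second_only2 j => E10_1 j
  | both1, both2 j => E1_11 j
  end.

Definition cond1 (p : sys) (k : profile1) : Prop :=
  match k with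
  | absent1 => True
  | second_only1 => Rbar_lt (lam1 p I2) (Finite (S1in p))
  | both1 => Rbar_lt (lam1 p I1) (Finite (S1in p))
  end.

Definition cond2 (p : sys) (l : profile2) (x11 x12 : R) : Prop :=
  match l with
  | absent2 => True
  | second_only2 j => Rbar_lt (lam2 p I2 j) (Finite (S2in p + alpha p * k2 p * x12))
  | both2 j => Rbar_lt (lam2 p I1 j) (Finite (S2in p + alpha p * k2 p * x11))
  end.

Lemma lam1_lt_finite (p : sys) (i : idx) (s : R) : Rbar_lt (lam1 p i) (Finite s) ->
  exists L, lam1 p i = Finite L /\ L < s.
Proof. unfold lam1. destruct (Rlt_dec _ _); simpl; [eauto|contradiction]. Qed.

Lemma lam2_lt_finite (p : sys) (i j : idx) (s : R) : Rbar_lt (lam2 p i j) (Finite s) ->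
  exists L, lam2 p i j = Finite L /\ L < s.
Proof. unfold lam2. destruct (Rle_dec _ _); simpl; [eauto|contradiction]. Qed.

Section Model.

Variable p : sys.
Hypothesis P : model_hyps p.

Lemma ri_pos (i : idx) : 0 < ri p i.
Proof. pose proof (r_range p P). destruct i; simpl; lra. Qed.

Lemma Di_pos (i : idx) : 0 < Di p i.
Proof. unfold Di. apply Rdiv_lt_0_compat; [exact (D_pos p P)|exact (ri_pos i)]. Qed.

Lemma aDi_pos (i : idx) : 0 < alpha p * Di p i.
Proof. apply Rmult_lt_0_compat; [exact (proj1 (alpha_range p P))|exact (Di_pos i)]. Qed.

Lemma threshold_iff (i : idx) (M : R) :
  (D p < ri p i * M / alpha p <-> alpha p * Di p i < M) /\
  (D p <= ri p i * M / alpha p <-> alpha p * Di p i <= M).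
Proof.
  pose proof (alpha_range p P); pose proof (ri_pos i).
  assert (E : ri p i * M / alpha p - D p = ri p i / alpha p * (M - alpha p * Di p i))
    by (unfold Di; field; lra).
  assert (0 < ri p i / alpha p) by (apply Rdiv_lt_0_compat; lra).
  split; split; intro; nra.
Qed.

Lemma lam1_of_root (i : idx) (S : R) : 0 <= S -> mu1 p S = alpha p * Di p i ->
  lam1 p i = Finite S.
Proof.
  intros HS E. pose proof (mu1_H1 p P) as H. unfold lam1.
  destruct (Rlt_dec _ _) as [_|Hge].
  - f_equal. apply epsilon_eq; [now split|].
    intros L [HL EL]. apply (H1_injective _ _ H); congruence.
  - exfalso. apply Hge, (proj1 (threshold_iff i (m1 p))).
    rewrite <- E. exact (H1_lt_limit _ _ H S HS).
Qed.

Lemma root_of_lam1 (i : idx) (L : R) : lam1 p i = Finite L ->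
  0 < L /\ mu1 p L = alpha p * Di p i.
Proof.
  pose proof (mu1_H1 p P) as H. pose proof (aDi_pos i) as Hc. unfold lam1.
  destruct (Rlt_dec _ _) as [Hlt|_]; [|discriminate].
  intros [= <-]. apply (proj1 (threshold_iff i (m1 p))) in Hlt.
  destruct (epsilon_spec (inhabits 0) (fun S => 0 <= S /\ mu1 p S = alpha p * Di p i))
    as [HL E]; [apply (H1_level _ _ H); lra|].
  split; [|exact E].
  destruct HL as [h|h]; [exact h|]. rewrite <- h, (H1_zero _ _ H) in E. lra.
Qed.

Lemma lam2_of_root (i : idx) (S : R) : 0 <= S -> mu2 p S = alpha p * Di p i ->
  exists j, lam2 p i j = Finite S.
Proof.
  intros HS E. pose proof (mu2_H2 p P) as H. unfold lam2.
  destruct (Rle_dec _ _) as [_|Hgt].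
  - destruct (Rle_lt_dec S (S2m p)) as [h|h]; [exists I1|exists I2]; f_equal;
      apply epsilon_eq; cbn iota.
    + repeat split; [exact HS|exact E|]. exact (H2_level_min _ _ H S _ (conj HS h) E).
    + intros L (HL & EL & Hmin). pose proof (Hmin S HS E).
      pose proof (H2_level_min _ _ H S _ (conj HS h) E L HL EL). lra.
    + repeat split; [exact HS|exact E|]. exact (H2_level_max _ _ H S _ (Rlt_le _ _ h) E).
    + intros L (HL & EL & Hmax). pose proof (Hmax S HS E).
      pose proof (H2_level_max _ _ H S _ (Rlt_le _ _ h) E L HL EL). lra.
  - exfalso. apply Hgt, (proj2 (threshold_iff i (mu2 p (S2m p)))).
    rewrite <- E. exact (H2_le_peak _ _ H S HS).
Qed.

Lemma root_of_lam2 (i j : idx) (L : R) : lam2 p i j = Finite L ->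
  0 < L /\ mu2 p L = alpha p * Di p i.
Proof.
  pose proof (mu2_H2 p P) as H. pose proof (aDi_pos i) as Hc. unfold lam2.
  destruct (Rle_dec _ _) as [Hle|_]; [|discriminate].
  intros [= <-]. apply (proj2 (threshold_iff i (mu2 p (S2m p)))) in Hle.
  match goal with |- context [epsilon ?inh ?Q] =>
    assert (HQ : Q (epsilon inh Q)) end.
  { apply epsilon_spec. destruct j.
    - destruct (H2_level_left _ _ H (alpha p * Di p i)) as (S & HS & E); [lra|].
      exists S. repeat split; [lra|exact E|]. exact (H2_level_min _ _ H S _ HS E).
    - destruct (H2_level_right _ _ H (alpha p * Di p i)) as (S & HS & E); [lra|].
      pose proof (H2_peak_pos _ _ H).
      exists S. repeat split; [lra|exact E|]. exact (H2_level_max _ _ H S _ HS E). }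
  destruct HQ as (HL & E & _). split; [|exact E].
  destruct HL as [h|h]; [exact h|]. rewrite <- h, (H2_zero _ _ H) in E. lra.
Qed.

Lemma X11star_of_lam1 (L : R) : lam1 p I1 = Finite L ->
  X11star p = (S1in p - L) / (alpha p * k1 p).
Proof. intros E. unfold X11star. now rewrite E. Qed.

Lemma X12star_spec (L : R) : lam1 p I1 = Finite L -> L < S1in p ->
  0 < X11star p < X12star p /\ alpha p * k1 p * X12star p < S1in p /\
  f1 p (X12star p) = g1 p (X12star p).
Proof.
  intros HL HLs. pose proof (mu1_H1 p P) as H.
  destruct (root_of_lam1 I1 L HL) as [HL0 EL].
  pose proof (alpha_range p P); pose proof (k1_pos p P); pose proof (aDi_pos I1).
  assert (Hak : 0 < alpha p * k1 p) by nra.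
  set (E := S1in p / (alpha p * k1 p)).
  assert (HX : alpha p * k1 p * X11star p = S1in p - L)
    by (rewrite (X11star_of_lam1 L HL); field; lra).
  assert (HFf : forall x, x <= E -> mu1 p (Rmax 0 (S1in p - alpha p * k1 p * x)) = f1 p x).
  { intros x Hx. apply (le_div_iff _ _ _ Hak) in Hx. rewrite Rmax_right by lra. reflexivity. }
  assert (HQ : X11star p < X12star p < E /\ f1 p (X12star p) = g1 p (X12star p)).
  { unfold X12star. apply epsilon_spec.
    destruct (balance_root_exists (fun x => mu1 p (Rmax 0 (S1in p - alpha p * k1 p * x)))
                (alpha p * Di p I2) (X11star p) E) as (x & Hx & Ex).
    - intro x. apply (continuity_pt_affine_comp (fun t => mu1 p (Rmax 0 t))).
      apply (H1_continuous _ _ H).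
    - exact (aDi_pos I2).
    - split; [apply (Rmult_lt_reg_l (alpha p * k1 p)); lra|].
      apply lt_div_iff; lra.
    - rewrite HFf by (apply le_div_iff; lra). unfold f1. rewrite HX.
      replace (S1in p - (S1in p - L)) with L by ring. lra.
    - replace (S1in p - alpha p * k1 p * E) with 0 by (unfold E; field; lra).
      rewrite Rmax_left, (H1_zero _ _ H); lra.
    - exists x. split; [exact Hx|]. rewrite <- HFf by lra. exact Ex. }
  destruct HQ as [[HX1 HX2] HQ].
  assert (0 < X11star p) by (apply (Rmult_lt_reg_l (alpha p * k1 p)); lra).
  apply (lt_div_iff _ _ _ Hak) in HX2. repeat split; lra.
Qed.

Lemma X12star_unique (x : R) : 0 < X11star p ->
  X11star p < x -> alpha p * k1 p * x < S1in p -> f1 p x = g1 p x -> X12star p = x.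
Proof.
  intros HX0 Hx1 Hx2 Ex. pose proof (mu1_H1 p P) as H.
  pose proof (alpha_range p P); pose proof (k1_pos p P).
  assert (Hak : 0 < alpha p * k1 p) by nra.
  unfold X12star. apply epsilon_eq.
  - repeat split; [exact Hx1|apply lt_div_iff; lra|exact Ex].
  - intros y [[Hy1 Hy2] Ey]. apply lt_div_iff in Hy2; [|exact Hak].
    apply (balance_root_unique (f1 p) (alpha p * Di p I2) (X11star p)
             (S1in p / (alpha p * k1 p)));
      try (split; [lra|apply lt_div_iff; lra]); [|exact (aDi_pos I2)|exact HX0|exact Ey|exact Ex].
    intros u v Hu Huv Hv. apply lt_div_iff in Hv; [|exact Hak].
    apply (H1_increasing _ _ H). nra.
Qed.

Lemma steady_iff_mass_balance (xi : state) : steady p xi <-> nonneg_state xi /\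
  S11 xi = S1in p - alpha p * k1 p * X11 xi /\
  S21 xi = S2in p + alpha p * k2 p * X11 xi - alpha p * k3 p * X21 xi /\
  S12 xi = S1in p - alpha p * k1 p * X12 xi /\
  S22 xi = S2in p + alpha p * k2 p * X12 xi - alpha p * k3 p * X22 xi /\
  (mu1 p (S11 xi) - alpha p * Di p I1) * X11 xi = 0 /\
  (mu2 p (S21 xi) - alpha p * Di p I1) * X21 xi = 0 /\
  mu1 p (S12 xi) * X12 xi = alpha p * Di p I2 * (X12 xi - X11 xi) /\
  mu2 p (S22 xi) * X22 xi = alpha p * Di p I2 * (X22 xi - X21 xi).
Proof.
  pose proof (Di_pos I1); pose proof (Di_pos I2).
  pose proof (k1_pos p P); pose proof (k2_pos p P); pose proof (k3_pos p P).
  destruct xi as [s11 x11 s21 x21 s12 x12 s22 x22].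
  unfold steady, nonneg_state; simpl. split.
  - intros (Hn & E1 & E2 & E3 & E4 & E5 & E6 & E7 & E8).
    assert (B11 : s11 = S1in p - alpha p * k1 p * x11)
      by (apply (Rmult_eq_reg_l (Di p I1)); [nra|lra]).
    assert (B21 : s21 = S2in p + alpha p * k2 p * x11 - alpha p * k3 p * x21)
      by (apply (Rmult_eq_reg_l (Di p I1)); [nra|lra]).
    assert (B12 : s12 = S1in p - alpha p * k1 p * x12)
      by (apply (Rmult_eq_reg_l (Di p I2)); [nra|lra]).
    assert (B22 : s22 = S2in p + alpha p * k2 p * x12 - alpha p * k3 p * x22)
      by (apply (Rmult_eq_reg_l (Di p I2)); [nra|lra]).
    repeat split; try assumption; lra.
  - intros (Hn & B11 & B21 & B12 & B22 & G11 & G21 & G12 & G22).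
    split; [exact Hn|]. subst s11 s21 s12 s22. repeat split; nra.
Qed.

Lemma species1_of_equations (s11 x11 s12 x12 : R) :
  0 <= s11 -> 0 <= x11 -> 0 <= s12 -> 0 <= x12 ->
  s11 = S1in p - alpha p * k1 p * x11 -> s12 = S1in p - alpha p * k1 p * x12 ->
  (mu1 p s11 - alpha p * Di p I1) * x11 = 0 ->
  mu1 p s12 * x12 = alpha p * Di p I2 * (x12 - x11) ->
  exists k, species1 p k s11 x11 s12 x12.
Proof.
  intros Hs11 Hx11 Hs12 Hx12 B11 B12 G11 G12. pose proof (mu1_H1 p P) as H.
  pose proof (aDi_pos I2). pose proof (alpha_range p P); pose proof (k1_pos p P).
  destruct (cascade_cases _ _ _ _ _ _ (aDi_pos I2) Hx11 Hx12 G11 G12)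
    as [(-> & ->)|[(-> & Px12 & E12)|(Px11 & E11 & Px12)]].
  - exists absent1. repeat split; assumption.
  - exists second_only1. repeat split; try assumption. exact (lam1_of_root I2 s12 Hs12 E12).
  - exists both1. pose proof (lam1_of_root I1 s11 Hs11 E11) as HL.
    repeat split; try assumption.
    destruct (root_of_lam1 I1 s11 HL) as [Ps11 _].
    assert (HX : X11star p = x11) by (rewrite (X11star_of_lam1 s11 HL), B11; field; nra).
    (* for [s12 = 0] the second-tank equation gives [x12 = x11], hence [s12 = s11 > 0] *)
    assert (Ps12 : 0 < s12).
    { destruct Hs12 as [h|<-]; [exact h|].
      rewrite (H1_zero _ _ H) in G12. assert (x12 = x11) by nra. subst x12. lra. }
    pose proof (H1_increasing _ _ H 0 s12 (conj (Rle_refl 0) Ps12)) as Hm.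
    rewrite (H1_zero _ _ H) in Hm.
    symmetry. apply X12star_unique; [lra|nra|lra|].
    unfold f1, g1. rewrite HX, <- B12. field_simplify_eq; lra.
Qed.

Lemma species2_of_equations (x11 x12 s21 x21 s22 x22 : R) :
  0 <= s21 -> 0 <= x21 -> 0 <= s22 -> 0 <= x22 ->
  s21 = S2in p + alpha p * k2 p * x11 - alpha p * k3 p * x21 ->
  s22 = S2in p + alpha p * k2 p * x12 - alpha p * k3 p * x22 ->
  (mu2 p s21 - alpha p * Di p I1) * x21 = 0 ->
  mu2 p s22 * x22 = alpha p * Di p I2 * (x22 - x21) ->
  exists l, species2 p l x11 x12 s21 x21 s22 x22.
Proof.
  intros Hs21 Hx21 Hs22 Hx22 B21 B22 G21 G22.
  destruct (cascade_cases _ _ _ _ _ _ (aDi_pos I2) Hx21 Hx22 G21 G22)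
    as [(-> & ->)|[(-> & Px22 & E22)|(Px21 & E21 & Px22)]].
  - exists absent2. repeat split; assumption.
  - destruct (lam2_of_root I2 s22 Hs22 E22) as [j Hj].
    exists (second_only2 j). repeat split; assumption.
  - destruct (lam2_of_root I1 s21 Hs21 E21) as [j Hj].
    exists (both2 j). repeat split; assumption.
Qed.

Lemma equations_of_species1 (k : profile1) (s11 x11 s12 x12 : R) :
  species1 p k s11 x11 s12 x12 ->
  0 <= s11 /\ 0 <= x11 /\ 0 <= s12 /\ x11 <= x12 /\
  (mu1 p s11 - alpha p * Di p I1) * x11 = 0 /\
  mu1 p s12 * x12 = alpha p * Di p I2 * (x12 - x11).
Proof.
  pose proof (S1in_pos p P); pose proof (alpha_range p P); pose proof (k1_pos p P).
  intros (B11 & B12 & Hk). destruct k.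
  - destruct Hk as (-> & ->). subst. repeat split; lra.
  - destruct Hk as (-> & HL & Px12).
    destruct (root_of_lam1 I2 s12 HL) as [Ps12 E12].
    subst s11. rewrite E12. repeat split; lra.
  - destruct Hk as (HL & Px11 & ->).
    destruct (root_of_lam1 I1 s11 HL) as [Ps11 E11].
    pose proof (Rmult_lt_0_compat (alpha p * k1 p) x11 ltac:(nra) Px11).
    destruct (X12star_spec s11 HL ltac:(lra)) as (HX & HX12 & Ef).
    assert (HX11 : X11star p = x11) by (rewrite (X11star_of_lam1 s11 HL), B11; field; nra).
    unfold f1, g1 in Ef. rewrite <- B12, HX11 in Ef. rewrite E11, Ef.
    repeat split; try lra. field; lra.
Qed.

Lemma equations_of_species2 (l : profile2) (x11 x12 s21 x21 s22 x22 : R) :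
  0 <= x11 -> 0 <= x12 -> species2 p l x11 x12 s21 x21 s22 x22 ->
  0 <= s21 /\ 0 <= x21 /\ 0 <= s22 /\ 0 <= x22 /\
  (mu2 p s21 - alpha p * Di p I1) * x21 = 0 /\
  mu2 p s22 * x22 = alpha p * Di p I2 * (x22 - x21).
Proof.
  pose proof (S2in_pos p P); pose proof (alpha_range p P); pose proof (k2_pos p P).
  intros Hx11 Hx12 (B21 & B22 & Hl).
  assert (Hak : 0 <= alpha p * k2 p) by nra.
  pose proof (Rmult_le_pos _ _ Hak Hx11); pose proof (Rmult_le_pos _ _ Hak Hx12).
  destruct l as [|j|j].
  - destruct Hl as (-> & ->). subst. repeat split; lra.
  - destruct Hl as (-> & HL & Px22).
    destruct (root_of_lam2 I2 j s22 HL) as [Ps22 E22].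
    subst s21. rewrite E22. repeat split; lra.
  - destruct Hl as (HL & Px21 & Px22 & Hs22 & G22).
    destruct (root_of_lam2 I1 j s21 HL) as [Ps21 E21].
    rewrite E21. repeat split; lra.
Qed.

Lemma species_of_steady (xi : state) : steady p xi ->
  exists k l, species1 p k (S11 xi) (X11 xi) (S12 xi) (X12 xi) /\
              species2 p l (X11 xi) (X12 xi) (S21 xi) (X21 xi) (S22 xi) (X22 xi).
Proof.
  intros Hs. apply steady_iff_mass_balance in Hs.
  destruct Hs as ((N11 & M11 & N21 & M21 & N12 & M12 & N22 & M22) &
                  B11 & B21 & B12 & B22 & G11 & G21 & G12 & G22).
  destruct (species1_of_equations _ _ _ _ N11 M11 N12 M12 B11 B12 G11 G12) as [k Hk].
  destruct (species2_of_equations _ _ _ _ _ _ N21 M21 N22 M22 B21 B22 G21 G22) as [l Hl].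
  now exists k, l.
Qed.

Lemma steady_of_species (k : profile1) (l : profile2) (xi : state) :
  species1 p k (S11 xi) (X11 xi) (S12 xi) (X12 xi) ->
  species2 p l (X11 xi) (X12 xi) (S21 xi) (X21 xi) (S22 xi) (X22 xi) ->
  steady p xi.
Proof.
  intros Hk Hl.
  destruct (equations_of_species1 _ _ _ _ _ Hk) as (N11 & M11 & N12 & Hx & G11 & G12).
  destruct (equations_of_species2 _ _ _ _ _ _ _ M11 (Rle_trans _ _ _ M11 Hx) Hl)
    as (N21 & M21 & N22 & M22 & G21 & G22).
  destruct Hk as (B11 & B12 & _). destruct Hl as (B21 & B22 & _).
  apply steady_iff_mass_balance. unfold nonneg_state. repeat split; (assumption || lra).
Qed.

Lemma sol2_of_equation (L x11 x12 x21 s22 x22 : R) :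
  s22 = L - alpha p * k2 p * (x11 - x12) + alpha p * k3 p * (x21 - x22) ->
  0 <= s22 -> 0 < x22 -> mu2 p s22 * x22 = alpha p * Di p I2 * (x22 - x21) ->
  sol2 p L x11 x12 x21 x22.
Proof.
  intros B22 Hs22 Px22 G22. pose proof (alpha_range p P); pose proof (k3_pos p P).
  assert (Hak : 0 < alpha p * k3 p) by nra.
  unfold sol2, d2, f2, g2. rewrite <- B22. repeat split.
  - exact Px22.
  - apply (Rplus_le_reg_l (- x21)). rewrite <- Rplus_assoc, Rplus_opp_l, Rplus_0_l.
    apply le_div_iff; [exact Hak|]. lra.
  - field_simplify_eq; lra.
Qed.

Lemma of_type_of_species (k : profile1) (l : profile2) (xi : state) :
  species1 p k (S11 xi) (X11 xi) (S12 xi) (X12 xi) ->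
  species2 p l (X11 xi) (X12 xi) (S21 xi) (X21 xi) (S22 xi) (X22 xi) ->
  of_type p (type_of k l) xi.
Proof.
  pose proof (alpha_range p P); pose proof (k1_pos p P); pose proof (k2_pos p P);
    pose proof (k3_pos p P).
  destruct xi as [s11 x11 s21 x21 s12 x12 s22 x22]; simpl.
  intros Hk Hl. destruct (equations_of_species1 _ _ _ _ _ Hk) as (_ & _ & _ & Hx & _).
  destruct Hk as (B11 & B12 & Hk), Hl as (B21 & B22 & Hl).
  destruct k, l as [|j|j]; simpl type_of; unfold of_type.
  - destruct Hk as (-> & ->), Hl as (-> & ->). subst. f_equal; ring.
  - destruct Hk as (-> & ->), Hl as (-> & HL & Px22). rewrite HL. simpl.
    repeat split; [|exact Px22]. subst. f_equal; field; lra.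
  - destruct Hk as (-> & ->), Hl as (HL & Px21 & Px22 & Hs22 & G22). rewrite HL. simpl.
    replace ((S2in p - s21) / (alpha p * k3 p)) with x21 by (subst; field; lra).
    split; [reflexivity|]. exists x22.
    split; [apply (sol2_of_equation _ _ _ _ s22); try assumption; subst; ring|].
    repeat split; try assumption; try lra. subst. f_equal; ring.
  - destruct Hk as (-> & HL & Px12), Hl as (-> & ->). rewrite HL. simpl.
    repeat split; [|exact Px12]. subst. f_equal; field; lra.
  - destruct Hk as (-> & HL & Px12), Hl as (-> & HL' & Px22). unfold Fij.
    rewrite HL, HL'. simpl. repeat split; try assumption; try lra. subst. f_equal; field; lra.
  - destruct Hk as (-> & HL & Px12), Hl as (HL' & Px21 & Px22 & Hs22 & G22).
    rewrite HL, HL'. simpl.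
    replace ((S2in p - s21) / (alpha p * k3 p)) with x21 by (subst; field; lra).
    replace ((S1in p - s12) / (alpha p * k1 p)) with x12 by (subst; field; lra).
    split; [reflexivity|split; [reflexivity|]]. exists x22.
    split; [apply (sol2_of_equation _ _ _ _ s22); try assumption; subst; ring|].
    repeat split; try assumption; try lra. subst. f_equal; field; lra.
  - destruct Hk as (HL & Px11 & ->), Hl as (-> & ->). rewrite HL. simpl.
    rewrite (X11star_of_lam1 s11 HL).
    repeat split; try assumption; try lra. subst. f_equal; field; lra.
  - destruct Hk as (HL & Px11 & ->), Hl as (-> & HL' & Px22). unfold phi.
    rewrite HL, HL'. simpl. rewrite (X11star_of_lam1 s11 HL).
    repeat split; try assumption; try lra. subst. f_equal; field; lra.
  - destruct Hk as (HL & Px11 & ->), Hl as (HL' & Px21 & Px22 & Hs22 & G22). unfold Fij.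
    rewrite HL, HL'. simpl.
    replace ((S1in p - s11) / (alpha p * k1 p)) with x11 by (subst; field; lra).
    replace (k2 p * (S1in p - (s11 + k1 p / k2 p * (s21 + - S2in p))) /
               (alpha p * k1 p * k3 p)) with x21 by (subst; field; lra).
    split; [reflexivity|split; [reflexivity|]]. exists x22.
    split; [apply (sol2_of_equation _ _ _ _ s22); try assumption; subst; ring|].
    repeat split; try assumption; try lra. subst. f_equal; field; lra.
Qed.

Lemma species1_exists (k : profile1) : cond1 p k ->
  exists s11 x11 s12 x12, species1 p k s11 x11 s12 x12.
Proof.
  pose proof (alpha_range p P); pose proof (k1_pos p P).
  assert (Hak : 0 < alpha p * k1 p) by nra.
  unfold cond1, species1. destruct k; intros Hc.
  - exists (S1in p), 0, (S1in p), 0. repeat split; ring.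
  - destruct (lam1_lt_finite p I2 _ Hc) as (L & HL & HLs). rewrite HL.
    exists (S1in p), 0, L, ((S1in p - L) / (alpha p * k1 p)).
    repeat split; [ring|field; lra|apply Rdiv_lt_0_compat; lra].
  - destruct (lam1_lt_finite p I1 _ Hc) as (L & HL & HLs). rewrite HL.
    destruct (X12star_spec L HL HLs) as ((HX11 & _) & _).
    exists L, (X11star p), (S1in p - alpha p * k1 p * X12star p), (X12star p).
    repeat split; try assumption. rewrite (X11star_of_lam1 L HL). field; lra.
Qed.

Lemma species2_exists (l : profile2) (x11 x12 : R) : 0 <= x11 <= x12 -> cond2 p l x11 x12 ->
  exists s21 x21 s22 x22, species2 p l x11 x12 s21 x21 s22 x22.
Proof.
  intros Hx. pose proof (alpha_range p P); pose proof (k2_pos p P); pose proof (k3_pos p P).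
  assert (Hak3 : 0 < alpha p * k3 p) by nra.
  assert (Hk : 0 <= alpha p * k2 p * (x12 - x11)) by (apply Rmult_le_pos; nra).
  unfold cond2, species2. destruct l as [|j|j]; intros Hc.
  - exists (S2in p + alpha p * k2 p * x11), 0, (S2in p + alpha p * k2 p * x12), 0.
    repeat split; ring.
  - destruct (lam2_lt_finite p I2 j _ Hc) as (L & HL & HLs). rewrite HL.
    exists (S2in p + alpha p * k2 p * x11), 0,
      L, ((S2in p + alpha p * k2 p * x12 - L) / (alpha p * k3 p)).
    repeat split; [ring|field; lra|apply Rdiv_lt_0_compat; lra].
  - destruct (lam2_lt_finite p I1 j _ Hc) as (L & HL & HLs). rewrite HL.
    destruct (root_of_lam2 I1 j L HL) as [HL0 _].
    set (x21 := (S2in p + alpha p * k2 p * x11 - L) / (alpha p * k3 p)).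
    assert (Px21 : 0 < x21) by (apply Rdiv_lt_0_compat; lra).
    assert (B21 : alpha p * k3 p * x21 = S2in p + alpha p * k2 p * x11 - L)
      by (unfold x21; field; lra).
    set (u := S2in p + alpha p * k2 p * x12).
    set (F x := mu2 p (Rmax 0 (u - alpha p * k3 p * x))).
    destruct (balance_root_exists F (alpha p * Di p I2) x21 (u / (alpha p * k3 p)))
      as (x22 & Hx22 & E22).
    + intro x. apply (continuity_pt_affine_comp (fun t => mu2 p (Rmax 0 t))).
      apply (H2_continuous _ _ (mu2_H2 p P)).
    + exact (aDi_pos I2).
    + split; [exact Px21|]. apply lt_div_iff; [exact Hak3|]. unfold u; lra.
    + unfold F. rewrite Rmax_right by (unfold u; lra).
      apply (H2_pos _ _ (mu2_H2 p P)). unfold u; lra.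
    + unfold F. replace (u - alpha p * k3 p * (u / (alpha p * k3 p))) with 0 by (field; lra).
      rewrite Rmax_left, (H2_zero _ _ (mu2_H2 p P)); lra.
    + destruct Hx22 as [Hx21 Hx22]. apply lt_div_iff in Hx22; [|exact Hak3].
      unfold F in E22. rewrite Rmax_right in E22 by lra.
      exists L, x21, (u - alpha p * k3 p * x22), x22.
      repeat split; try assumption; try lra. rewrite E22. field; lra.
Qed.

Lemma exists_steady_of_profiles (k : profile1) (l : profile2) : cond1 p k ->
  (forall s11 x11 s12 x12, species1 p k s11 x11 s12 x12 -> cond2 p l x11 x12) ->
  exists xi, steady p xi /\ of_type p (type_of k l) xi.
Proof.
  intros Hk Hl.
  destruct (species1_exists k Hk) as (s11 & x11 & s12 & x12 & H1).
  destruct (equations_of_species1 _ _ _ _ _ H1) as (_ & Hx11 & _ & Hx & _).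
  destruct (species2_exists l x11 x12 (conj Hx11 Hx) (Hl _ _ _ _ H1))
    as (s21 & x21 & s22 & x22 & H2).
  exists (mkState s11 x11 s21 x21 s12 x12 s22 x22).
  split; [apply (steady_of_species k l)|apply of_type_of_species]; assumption.
Qed.

Lemma Fij_lt_iff (i j : idx) (L x : R) : lam1 p i = Finite L ->
  alpha p * k1 p * x = S1in p - L ->
  Rbar_lt (Fij p i j) (Finite (S1in p)) <->
  Rbar_lt (lam2 p i j) (Finite (S2in p + alpha p * k2 p * x)).
Proof.
  intros HL Hx. pose proof (k1_pos p P); pose proof (k2_pos p P).
  assert (Hk : 0 < k1 p / k2 p) by (apply Rdiv_lt_0_compat; lra).
  unfold Fij. rewrite HL. destruct (lam2 p i j) as [L'| |]; simpl.
  - assert (E : S1in p - (L + k1 p / k2 p * (L' + - S2in p)) =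
                k1 p / k2 p * (S2in p + alpha p * k2 p * x - L'))
      by (replace (S1in p) with (L + alpha p * k1 p * x) by lra; field; lra).
    split; intro; nra.
  - unfold Rbar_mult, Rbar_mult'. destruct (Rle_dec 0 _) as [h|h]; [|lra].
    destruct (Rle_lt_or_eq_dec 0 _ h); [simpl; tauto|lra].
  - unfold Rbar_mult, Rbar_mult'. destruct (Rle_dec 0 _) as [h|h]; [|lra].
    destruct (Rle_lt_or_eq_dec 0 _ h); [simpl; tauto|lra].
Qed.

Lemma phi_pos_iff (j : idx) : Rbar_lt (Finite 0) (phi p j) <->
  Rbar_lt (lam2 p I2 j) (Finite (S2in p + alpha p * k2 p * X12star p)).
Proof. unfold phi. destruct (lam2 p I2 j); simpl; lra. Qed.

Lemma exists_steady_of_cond (t : ty) : cond p t -> exists xi, steady p xi /\ of_type p t xi.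
Proof.
  destruct t; unfold cond; intros Hc.
  - apply (exists_steady_of_profiles absent1 absent2); simpl; auto.
  - apply (exists_steady_of_profiles absent1 (second_only2 i)); [exact I|].
    intros ? ? ? ? (_ & _ & _ & ->). simpl. now rewrite Rmult_0_r, Rplus_0_r.
  - apply (exists_steady_of_profiles second_only1 absent2); simpl; auto.
  - destruct Hc as [Hc1 Hc2].
    apply (exists_steady_of_profiles second_only1 (second_only2 i)); [exact Hc1|].
    intros s11 x11 s12 x12 (_ & B12 & _ & HL & _). simpl.
    apply (Fij_lt_iff I2 i s12 x12 HL); [lra|exact Hc2].
  - apply (exists_steady_of_profiles both1 absent2); simpl; auto.
  - destruct Hc as [Hc1 Hc2].
    apply (exists_steady_of_profiles both1 (second_only2 i)); [exact Hc1|].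
    intros ? ? ? ? (_ & _ & _ & _ & ->). now apply phi_pos_iff.
  - apply (exists_steady_of_profiles absent1 (both2 i)); [exact I|].
    intros ? ? ? ? (_ & _ & -> & _). simpl. now rewrite Rmult_0_r, Rplus_0_r.
  - destruct Hc as [Hc1 Hc2].
    apply (exists_steady_of_profiles second_only1 (both2 i)); [exact Hc1|].
    intros ? ? ? ? (_ & _ & -> & _). simpl. now rewrite Rmult_0_r, Rplus_0_r.
  - destruct Hc as [Hc1 Hc2].
    apply (exists_steady_of_profiles both1 (both2 i)); [exact Hc1|].
    intros s11 x11 s12 x12 (B11 & _ & HL & _). simpl.
    apply (Fij_lt_iff I1 i s11 x11 HL); [lra|exact Hc2].
Qed.

Lemma cond_of_type (t : ty) (xi : state) : of_type p t xi -> cond p t.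
Proof.
  pose proof (alpha_range p P); pose proof (k1_pos p P); pose proof (k2_pos p P);
    pose proof (k3_pos p P).
  assert (Hak1 : 0 < alpha p * k1 p) by nra. assert (Hak3 : 0 < alpha p * k3 p) by nra.
  assert (Hakk : 0 < alpha p * k1 p * k3 p) by nra.
  destruct t; unfold of_type, cond, Fij, phi, X11star; simpl.
  - easy.
  - intros (F & -> & Hx). rewrite <- F in *. simpl in *.
    apply lt_div_iff in Hx; try assumption; nra.
  - intros (F & -> & Hx). rewrite <- F in *. simpl in *.
    apply lt_div_iff in Hx; try assumption; nra.
  - intros (F1 & F2 & -> & Hx1 & Hx2). rewrite <- F1, <- F2 in *. simpl in *.
    apply lt_div_iff in Hx1, Hx2; try assumption; nra.
  - intros (F & -> & Hx1 & Hx2). rewrite <- F in *. simpl in *.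
    apply lt_div_iff in Hx1; try assumption; nra.
  - intros (F1 & F2 & -> & Hx1 & Hx2 & Hx3). rewrite <- F1, <- F2 in *. simpl in *.
    apply lt_div_iff in Hx1, Hx3; try assumption; nra.
  - intros (F & x & _ & -> & Hx1 & Hx2). rewrite <- F in *. simpl in *.
    apply lt_div_iff in Hx1; try assumption; nra.
  - intros (F1 & F2 & x & _ & -> & Hx1 & Hx2 & Hx3). rewrite <- F1, <- F2 in *. simpl in *.
    apply lt_div_iff in Hx1, Hx2; try assumption; nra.
  - intros (F1 & F2 & x & _ & -> & Hx1 & Hx2 & Hx3 & Hx4). rewrite <- F1, <- F2 in *.
    simpl in *. apply lt_div_iff in Hx1, Hx2; try assumption; nra.
Qed.

End Model.

Theorem proposition2 (p : sys) :
  0 < D p -> 0 < r p < 1 -> 0 < alpha p < 1 ->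
  0 < k1 p -> 0 < k2 p -> 0 < k3 p -> 0 < S1in p -> 0 < S2in p ->
  H1 (mu1 p) (m1 p) -> H2 (mu2 p) (S2m p) ->
  (forall xi, steady p xi -> exists t, of_type p t xi) /\
  (forall t, (exists xi, steady p xi /\ of_type p t xi) <-> cond p t).
Proof.
  intros HD Hr Ha Hk1 Hk2 Hk3 Hs1 Hs2 HH1 HH2.
  assert (P : model_hyps p) by (constructor; assumption).
  split.
  - intros xi Hs. destruct (species_of_steady p P xi Hs) as (k & l & Hk & Hl).
    exists (type_of k l). exact (of_type_of_species p P k l xi Hk Hl).
  - intros t. split.
    + intros (xi & _ & Ht). exact (cond_of_type p P t xi Ht).
    + exact (exists_steady_of_cond p P t).
Qed.
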